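(* Let $k\ge 1$ and let $\pi$ be a feasible signature of a $k$-move. Then there is a subset $E_\pi\subseteq\{e_1,\ldots,e_k\}$ of the removed edges with $|E_\pi|\ge\lceil k/3\rceil$ whose edges are pairwise non-interfering.
   Context: Consider a tour $T$ (Hamiltonian cycle) in a complete graph and a $k$-move that removes edges $e_1,\ldots,e_k$ of $T$ and inserts $k$ edges $f_1,\ldots,f_k$ so that the result is a tour. Write $e_i=\{v_{2i-1},v_{2i}\}$, where the vertices $v_1,\ldots,v_{2k}$ are pairwise distinct and indexed in the order in which $T$ traverses them. The signature of the move is the permutation $\pi$ of $\{1,\ldots,2k\}$ such that $v_j$ and $v_{\pi(j)}$ are the two endpoints of one of the inserted edges $f_1,\ldots,f_k$; a signature is feasible if it arises from some $k$-move (so $\pi(\pi(j))=j$, $\pi(j)\ne j$, and removing the $e_i$ and inserting the $f_i$ yields a single Hamiltonian cycle). Two removed edges $e_i,e_j$ ($i\ne j$) interfere if some inserted edge connects an endpoint of $e_i$ to an endpoint of $e_j$ (equivalently, $\pi(\{2i-1,2i\})\cap\{2j-1,2j\}\neq\emptyset$); otherwise they are non-interfering. *)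

From mathcomp Require Import all_boot all_fingroup.
From mathcomp Require Import zify.

Set Implicit Arguments.
Unset Strict Implicit.
Unset Printing Implicit Defensive.

(* Conventions (0-based): vertices of K_n are 'I_n; a tour T is given by a
   permutation s : {perm 'I_n} listing its vertices in traversal order
   (position p holds vertex s p); its edges are {s p, s (p+1 mod n)}.
   The 2k endpoints of a k-move are v : 'I_(2k) -> 'I_n; the removed edge
   e_i (i : 'I_k, the paper's e_{i+1}) is {v (2i), v (2i+1)}. *)

Lemma lo_subproof k (i : 'I_k) : 2 * i < 2 * k.
Proof. have := ltn_ord i; lia. Qed.
Lemma hi_subproof k (i : 'I_k) : (2 * i).+1 < 2 * k.
Proof. have := ltn_ord i; lia. Qed.

Definition lo k (i : 'I_k) : 'I_(2 * k) := Ordinal (lo_subproof i).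
Definition hi k (i : 'I_k) : 'I_(2 * k) := Ordinal (hi_subproof i).

Definition tour_edges n (s : {perm 'I_n}) : {set {set 'I_n}} :=
  [set [set s p; s (ordS p)] | p : 'I_n].

Definition is_tour n (F : {set {set 'I_n}}) : Prop :=
  exists s : {perm 'I_n}, F = tour_edges s.

Definition removed_edges n k (v : 'I_(2 * k) -> 'I_n) : {set {set 'I_n}} :=
  [set [set v (lo i); v (hi i)] | i : 'I_k].

Definition inserted_edges n k (v : 'I_(2 * k) -> 'I_n) (pi : {perm 'I_(2 * k)})
  : {set {set 'I_n}} :=
  [set [set v j; v (pi j)] | j : 'I_(2 * k)].

Definition feasible_signature k (pi : {perm 'I_(2 * k)}) : Prop :=
  [/\ forall j, pi (pi j) = j,
      forall j, pi j != j &
      exists n (s : {perm 'I_n}) (v : 'I_(2 * k) -> 'I_n),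
        [/\ 3 <= n,
            injective v,
            (* v_1,...,v_{2k} indexed in the order T traverses them *)
            (forall j j' : 'I_(2 * k), j < j' -> ((s^-1)%g (v j) < (s^-1)%g (v j'))%N),
            removed_edges v \subset tour_edges s &
            is_tour ((tour_edges s :\: removed_edges v) :|: inserted_edges v pi)]].

Definition interfere k (pi : {perm 'I_(2 * k)}) (i j : 'I_k) : Prop :=
  exists2 a, a \in [set lo i; hi i] & pi a \in [set lo j; hi j].

From mathcomp Require Import all_boot all_fingroup.
From mathcomp Require Import zify.

Set Implicit Arguments.
Unset Strict Implicit.
Unset Printing Implicit Defensive.

(* Since pi is an involution, every removed edge e_i interferes (in either
   direction) only with the at most two edges containing pi(v_lo) and
   pi(v_hi). Greedily keeping an edge and discarding it together with these
   partners keeps at least one edge out of every three. *)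

Lemma greedy_independent_subset (T : finType) (r : T -> T -> Prop)
    (N : T -> {set T}) (m : nat) :
  (forall x, #|N x| <= m) ->
  (forall x y, x != y -> r x y \/ r y x -> y \in N x) ->
  forall S : {set T}, exists2 E : {set T}, E \subset S &
    #|S| <= m.+1 * #|E| /\
    (forall x y, x \in E -> y \in E -> x != y -> ~ r x y).
Proof.
move=> cardN coverN S; have [n] := ubnP #|S|; elim: n S => // n IH S ltSn.
case: (set_0Vmem S) => [->|[x xS]].
  by exists set0; rewrite ?sub0set // cards0; split=> // ? ?; rewrite inE.
set D := x |: N x.
have cardD : #|D| <= m.+1 by rewrite cardsU1 -add1n leq_add ?leq_b1.
have lt_rest : #|S :\: D| < n.
  apply: leq_ltn_trans (subset_leq_card (@setDS _ [set x] D S _)) _.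
    by rewrite sub1set setU11.
  by apply: leq_trans (proper_card (properD1 xS)) _; rewrite -ltnS.
have [E' subE' [cardE' indepE']] := IH _ lt_rest.
have outsideD y : y \in E' -> y \notin D.
  by move=> /(subsetP subE'); rewrite inE => /andP [].
have xE' : x \notin E' by apply/negP => /outsideD; rewrite !inE eqxx.
exists (x |: E').
  apply/subsetP => y /setU1P [-> //|/(subsetP subE')].
  by rewrite inE => /andP [].
split.
  rewrite -(cardsID D S) cardsU1 xE' mulnDr muln1 leq_add //.
  exact: leq_trans (subset_leq_card (subsetIr _ _)) cardD.
have far y : y \in E' -> x != y /\ ~ (r x y \/ r y x).
  move=> /outsideD; rewrite !inE negb_or eq_sym => /andP [xy yN].
  by split=> // /(coverN _ _ xy); apply/negP.
move=> y z /setU1P [->|yE] /setU1P [->|zE] yz.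
- by rewrite eqxx in yz.
- by move=> ryz; case: (far z zE) => _; apply; left.
- by move=> ryz; case: (far y yE) => _; apply; right.
- exact: indepE'.
Qed.

Lemma edge_of_subproof k (a : 'I_(2 * k)) : a %/ 2 < k.
Proof. have := ltn_ord a; lia. Qed.

Definition edge_of k (a : 'I_(2 * k)) : 'I_k := Ordinal (edge_of_subproof a).

Lemma edge_of_endpoint k (i : 'I_k) (a : 'I_(2 * k)) :
  a \in [set lo i; hi i] -> edge_of a = i.
Proof. by rewrite !inE => /orP [] /eqP ->; apply/val_inj => /=; lia. Qed.

Definition partners k (pi : {perm 'I_(2 * k)}) (i : 'I_k) : {set 'I_k} :=
  [set edge_of (pi (lo i)); edge_of (pi (hi i))].

Lemma card_partners k (pi : {perm 'I_(2 * k)}) (i : 'I_k) : #|partners pi i| <= 2.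
Proof. by rewrite cards2; case: eqP. Qed.

Lemma mem_partners k (pi : {perm 'I_(2 * k)}) (i : 'I_k) (b : 'I_(2 * k)) :
  b \in [set lo i; hi i] -> edge_of (pi b) \in partners pi i.
Proof. by rewrite !inE => /orP [] /eqP ->; rewrite eqxx ?orbT. Qed.

Lemma interfere_partners k (pi : {perm 'I_(2 * k)}) (i j : 'I_k) :
  (forall a, pi (pi a) = a) ->
  interfere pi i j \/ interfere pi j i -> j \in partners pi i.
Proof.
move=> piK [[a aI paJ]|[a aJ paI]].
  by rewrite -(edge_of_endpoint paJ); exact: mem_partners.
by rewrite -(edge_of_endpoint aJ) -{1}(piK a); exact: mem_partners.
Qed.

Theorem lemma7 (k : nat) (pi : {perm 'I_(2 * k)}) :
  1 <= k -> feasible_signature pi ->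
  exists E : {set 'I_k},
    (k + 2) %/ 3 <= #|E| /\
    (forall i j, i \in E -> j \in E -> i != j -> ~ interfere pi i j).
Proof.
move=> _ [piK _ _].
have [E _ [cardE indepE]] := greedy_independent_subset (@card_partners k pi)
  (fun i j _ => interfere_partners piK) [set: 'I_k].
exists E; split => //.
by move: cardE; rewrite cardsT card_ord; move: #|E|; lia.
Qed.
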